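(* The relation $\{(\rho,\sigma,\pi):\rho,\sigma,\pi\text{ are total and }|\pi|=|\rho|\cdot|\sigma|\}$ is $\Pi_3$-definable in $\mathbf Y^*=\langle\mathcal P,\le,[1]+[1]\rangle$.
   Context: $\mathcal P$ is the set of all integer partitions, including the empty partition $\emptyset$; a partition is a nonincreasing finite sequence of positive integers (its parts), and $|\pi|$ is the sum of its parts. A partition is total if it has exactly one part; $\emptyset$ also counts as total. Young's lattice $\mathbf Y=\langle\mathcal P,\le\rangle$ has $(s_1,\dots,s_r)\le(n_1,\dots,n_t)$ iff $r\le t$ and $s_i\le n_i$ for all $i\le r$; $\mathbf Y^*$ is $\mathbf Y$ with a constant symbol for the partition $(1,1)$. A relation is $\Pi_n$-definable if it is defined by a first-order formula in the language $\{\le,(1,1)\}$ in prenex form with $n$ alternating quantifier blocks, the outermost universal, and a quantifier-free matrix. *)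

From mathcomp Require Import all_boot.
Set Implicit Arguments. Unset Strict Implicit. Unset Printing Implicit Defensive.

Definition is_partition (s : seq nat) : bool :=
  sorted geq s && all (fun x => 0 < x) s.

Record partition := Part { parts : seq nat; partsP : is_partition parts }.

Definition part_weight (p : partition) : nat := sumn (parts p).

Definition total_part (p : partition) : Prop := size (parts p) <= 1.

Definition young_le (s n : partition) : Prop :=
  size (parts s) <= size (parts n) /\
  forall i, i < size (parts s) -> nth 0 (parts s) i <= nth 0 (parts n) i.

Definition p11 : partition := @Part [:: 1; 1] erefl.

Inductive term := TVar of nat | TConst.

Inductive qf :=
| QTrue | QFalse
| QLe of term & term
| QEq of term & term
| QNot of qf
| QAnd of qf & qf
| QOr of qf & qf.

Definition eval_term (v : nat -> partition) (t : term) : partition :=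
  match t with TVar x => v x | TConst => p11 end.

Fixpoint qf_sat (v : nat -> partition) (f : qf) : Prop :=
  match f with
  | QTrue => True
  | QFalse => False
  | QLe a b => young_le (eval_term v a) (eval_term v b)
  | QEq a b => eval_term v a = eval_term v b
  | QNot g => ~ qf_sat v g
  | QAnd g h => qf_sat v g /\ qf_sat v h
  | QOr g h => qf_sat v g \/ qf_sat v h
  end.

Definition upd (v : nat -> partition) (x : nat) (p : partition) : nat -> partition :=
  fun y => if y == x then p else v y.

Fixpoint quant_block (univ : bool) (b : seq nat) (v : nat -> partition)
  (K : (nat -> partition) -> Prop) : Prop :=
  match b with
  | [::] => K v
  | x :: b' => if univ then forall p, quant_block univ b' (upd v x p) K
               else exists p, quant_block univ b' (upd v x p) K
  end.

Fixpoint prenex_sat (univ : bool) (bs : seq (seq nat)) (m : qf)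
  (v : nat -> partition) : Prop :=
  match bs with
  | [::] => qf_sat v m
  | b :: bs' => quant_block univ b v (prenex_sat (~~ univ) bs' m)
  end.

Definition Pi_definable3 (n : nat) (R : partition -> partition -> partition -> Prop) : Prop :=
  exists (bs : seq (seq nat)) (m : qf),
    size bs = n /\
    forall v : nat -> partition, prenex_sat true bs m v <-> R (v 0) (v 1) (v 2).

(* Total partitions are those not above (1,1), columns those not above (2),
   and many relations between rows are first-order expressible by comparing
   with totals and columns: "L contains the rectangle cut out by the row (p)
   and the column of height q" (rect_in), covers, comparison of first rows.
   With rho = (m) and sigma = (k), the defining formula universally quantifies
   auxiliary partitions t, s, S, Q, Dm, DM, D', mu and says: either one of
   them is not its intended value (t = (2), s = (k+1), Q = column (k+1),
   Dm, DM, D' staircases, mu the staircase with rows m k, (m-1) k, ..., k),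
   which is a Sigma_2 condition, or pi is the first row of mu.  Since the
   intended values pass all tests, and every test-passing mu has first row
   m k, this defines the relation. *)

From Pilot Require Import Defs.
From mathcomp Require Import all_boot zify.
From HB Require Import structures.
From Stdlib Require Import Classical FunctionalExtensionality.
Set Implicit Arguments. Unset Strict Implicit. Unset Printing Implicit Defensive.

(* [partition] also names a finset notion; we mean integer partitions. *)
Notation partition := Defs.partition.

(* Partitions are a subtype of [seq nat], so [insubd] builds them from rows. *)
HB.instance Definition _ := [isSub for parts].

Definition row (p : partition) (i : nat) : nat := nth 0 (parts p) i.
Definition height (p : partition) : nat := size (parts p).

Lemma row_gt0 p i : (0 < row p i) = (i < height p).
Proof.
case: p => s Hs; case/andP: (Hs) => _ pos; rewrite /row /height /=.
case: (ltnP i (size s)) => Hi; last by rewrite nth_default.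
exact: (all_nthP 0 pos).
Qed.

Lemma row_default p i : height p <= i -> row p i = 0.
Proof. by move=> Hi; apply/eqP; rewrite -leqn0 leqNgt row_gt0 -leqNgt. Qed.

Lemma row_antimono p i j : i <= j -> row p j <= row p i.
Proof.
case: p => s Hs; case/andP: (Hs) => sorted_s _; rewrite /row /= => Hij.
case: (ltnP j (size s)) => Hj; last by rewrite (nth_default _ Hj).
have geq_trans : transitive geq by move=> b a c /= ba cb; exact: leq_trans cb ba.
exact: (sorted_leq_nth geq_trans (fun a => leqnn a) 0 sorted_s i j (leq_ltn_trans Hij Hj) Hj Hij).
Qed.

Lemma young_leE a b : young_le a b <-> forall i, row a i <= row b i.
Proof.
split=> [[_ le_ab] i|le_ab].
  by case: (ltnP i (height a)) => [/le_ab//|Hi]; rewrite row_default.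
split=> [|i _]; last exact: le_ab.
rewrite -/(height a) -/(height b) leqNgt; apply/negP => hab.
by have := le_ab (height b); rewrite (@row_default b) // leqNgt row_gt0 hab.
Qed.

Lemma partition_ext a b : (forall i, row a i = row b i) -> a = b.
Proof.
move=> eq_ab; have same_h i : (i < height a) = (i < height b) by rewrite -!row_gt0 eq_ab.
have eq_h : height a = height b.
  apply/eqP; rewrite eqn_leq; apply/andP; split; rewrite leqNgt; apply/negP => lt.
  - by move: (same_h (height b)); rewrite lt ltnn.
  - by move: (same_h (height a)); rewrite lt ltnn.
apply: val_inj; apply: (eq_from_nth (x0 := 0) eq_h) => i _; exact: eq_ab.
Qed.

Definition row_profile (f : nat -> nat) (n : nat) : Prop :=
  (forall i j, i <= j -> f j <= f i) /\ (forall i, (0 < f i) = (i < n)).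

Definition empty_partition : partition := @Part [::] erefl.
Definition partition_of (f : nat -> nat) (n : nat) : partition :=
  insubd empty_partition (mkseq f n).

Section PartitionOf.
Variables (f : nat -> nat) (n : nat).
Hypothesis prof : row_profile f n.

Lemma partition_ofK : parts (partition_of f n) = mkseq f n.
Proof.
case: prof => anti pos; apply: insubdK; apply/andP; split.
- by apply: homo_sorted (iota_sorted 0 n) => x y; exact: anti.
- by apply/allP => x /mapP [i]; rewrite mem_iota add0n => /andP [_ Hi] ->; rewrite pos.
Qed.

Lemma row_partition_of i : row (partition_of f n) i = f i.
Proof.
rewrite /row partition_ofK; case: (ltnP i n) => Hi; first by rewrite nth_mkseq.
rewrite nth_default ?size_mkseq //; move: (prof.2 i); rewrite (leq_gtF Hi).
by case: (f i).
Qed.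

Lemma height_partition_of : height (partition_of f n) = n.
Proof. by rewrite /height partition_ofK size_mkseq. Qed.
End PartitionOf.

Definition tot (a : nat) : partition :=
  partition_of (fun i => if i == 0 then a else 0) (0 < a).
Definition column (q : nat) : partition := partition_of (fun i => i < q) q.
Definition rect (w h : nat) : partition :=
  partition_of (fun i => if i < h then w else 0) (if 0 < w then h else 0).
Definition staircase (n : nat) : partition := partition_of (fun i => n - i) n.
Definition arith_staircase (m k : nat) : partition :=
  partition_of (fun i => (m - i) * k) (if 0 < k then m else 0).

Lemma tot_profile a : row_profile (fun i => if i == 0 then a else 0) (0 < a).
Proof. by split=> [[|i] [|j] //|[|i] //]; case: a. Qed.

Lemma column_profile q : row_profile (fun i => i < q) q.
Proof.
split=> [i j le_ij|i]; last by case: (i < q).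
by case: (ltnP j q) => [/(leq_ltn_trans le_ij) ->|]; last case: (i < q).
Qed.

Lemma rect_profile w h : row_profile (fun i => if i < h then w else 0) (if 0 < w then h else 0).
Proof.
split=> [i j le_ij|i]; first by case: (ltnP j h) => [/(leq_ltn_trans le_ij) ->|].
by case: (posnP w) => [->|w_gt0]; rewrite ?w_gt0; case: (i < h).
Qed.

Lemma staircase_profile n : row_profile (fun i => n - i) n.
Proof. by split=> [i j le_ij|i]; [exact: leq_sub2l | rewrite subn_gt0]. Qed.

Lemma arith_staircase_profile m k :
  row_profile (fun i => (m - i) * k) (if 0 < k then m else 0).
Proof.
split=> [i j le_ij|i]; first by rewrite leq_mul2r leq_sub2l ?orbT.
by case: (posnP k) => [->|k_gt0]; rewrite ?muln0 // muln_gt0 k_gt0 andbT subn_gt0.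
Qed.

Lemma row_tot a i : row (tot a) i = if i == 0 then a else 0.
Proof. exact: (row_partition_of (tot_profile a)). Qed.

Lemma row_tot0 a : row (tot a) 0 = a.
Proof. by rewrite row_tot. Qed.

Lemma row_column q i : row (column q) i = (i < q).
Proof. exact: (row_partition_of (column_profile q)). Qed.

Lemma height_column q : height (column q) = q.
Proof. exact: (height_partition_of (column_profile q)). Qed.

Lemma row_rect w h i : row (rect w h) i = if i < h then w else 0.
Proof. exact: (row_partition_of (rect_profile w h)). Qed.

Lemma height_rect w h : height (rect w h) = if 0 < w then h else 0.
Proof. exact: (height_partition_of (rect_profile w h)). Qed.

Lemma row_staircase n i : row (staircase n) i = n - i.
Proof. exact: (row_partition_of (staircase_profile n)). Qed.

Lemma height_staircase n : height (staircase n) = n.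
Proof. exact: (height_partition_of (staircase_profile n)). Qed.

Lemma row_arith_staircase m k i : row (arith_staircase m k) i = (m - i) * k.
Proof. exact: (row_partition_of (arith_staircase_profile m k)). Qed.

Lemma height_arith_staircase m k : 0 < k -> height (arith_staircase m k) = m.
Proof. by move=> k_gt0; rewrite (height_partition_of (arith_staircase_profile m k)) k_gt0. Qed.

Lemma p11_column : p11 = column 2.
Proof.
by apply: partition_ext => i; rewrite row_column /row; case: i => [|[|i]] //=; rewrite nth_nil.
Qed.

Lemma tot_le a x : young_le (tot a) x <-> a <= row x 0.
Proof.
rewrite young_leE; split=> [/(_ 0)|le_a [|i]]; rewrite row_tot //.
Qed.

Lemma le_tot x a : young_le x (tot a) <-> row x 0 <= a /\ row x 1 = 0.
Proof.
rewrite young_leE; split=> [le_x|[le_x0 x1] [|i]]; rewrite ?row_tot //.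
  by split; [have := le_x 0 | have := le_x 1]; rewrite row_tot //= leqn0 => /eqP.
by have := row_antimono x (ltn0Sn i); rewrite x1 leqn0 => /eqP ->.
Qed.

Lemma total_iff x : ~ young_le p11 x <-> row x 1 = 0.
Proof.
rewrite p11_column young_leE; split=> [not_le|x1 le_x].
  apply/eqP; rewrite -leqn0 leqNgt; apply/negP => x1; apply: not_le => i.
  rewrite row_column; case: (ltnP i 2) => //= i_le1.
  exact: leq_trans x1 (@row_antimono x i 1 i_le1).
by have := le_x 1; rewrite row_column x1.
Qed.

Lemma totalE x : ~ young_le p11 x -> x = tot (row x 0).
Proof.
move/total_iff => x1; apply: partition_ext => -[|i]; rewrite row_tot //=.
by have := row_antimono x (ltn0Sn i); rewrite x1 leqn0 => /eqP.
Qed.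

Lemma totalP x : ~ young_le p11 x -> exists a, x = tot a.
Proof. by move/totalE => ->; exists (row x 0). Qed.

Lemma tot_total a : ~ young_le p11 (tot a).
Proof. by apply/total_iff; rewrite row_tot. Qed.

Lemma tot_inj : injective tot.
Proof. by move=> a b eq_ab; rewrite -(row_tot0 a) eq_ab row_tot0. Qed.

Lemma column_iff x : ~ young_le (tot 2) x <-> row x 0 <= 1.
Proof. rewrite tot_le; lia. Qed.

Lemma columnE x : ~ young_le (tot 2) x -> x = column (height x).
Proof.
move/column_iff => x0; apply: partition_ext => i; rewrite row_column -row_gt0.
by have := leq_trans (row_antimono x (leq0n i)) x0; case: (row x i) => [|[|]].
Qed.

Lemma columnP x : ~ young_le (tot 2) x -> exists q, x = column q.
Proof. by move/columnE => ->; exists (height x). Qed.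

Lemma column_column q : ~ young_le (tot 2) (column q).
Proof. by apply/column_iff; rewrite row_column; case: (0 < q). Qed.

Lemma column_inj : injective column.
Proof. by move=> a b eq_ab; rewrite -(height_column a) eq_ab height_column. Qed.

Lemma column_le q x : young_le (column q) x <-> q <= height x.
Proof.
rewrite young_leE; split=> [le_q|le_q i].
  by case: q le_q => [|q] // /(_ q); rewrite row_column ltnSn /= row_gt0.
rewrite row_column; case: (ltnP i q) => //= i_lt; rewrite row_gt0.
exact: leq_trans i_lt le_q.
Qed.

Lemma le_column x q : young_le x (column q) <-> row x 0 <= 1 /\ height x <= q.
Proof.
split=> [le_x|[x0 hx]].
  2: by rewrite (columnE (proj2 (column_iff x) x0)) column_le height_column.
split; last by rewrite -(height_column q); exact: le_x.1.
move/young_leE: le_x => /(_ 0) /leq_trans; apply.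
by rewrite row_column; case: (0 < q).
Qed.

Lemma p11_le x : young_le p11 x <-> 2 <= height x.
Proof. by rewrite p11_column column_le. Qed.

(* Each negative
   form is spelled out as the existential formula that actually occurs in the
   defining formula (whose matrix only negates atoms). *)

Definition rect_in (P Q L : partition) : Prop :=
  forall z, (young_le P z \/ young_le Q z) \/ young_le z L.
Definition not_rect_in (P Q L : partition) : Prop :=
  exists z, (~ young_le P z /\ ~ young_le Q z) /\ ~ young_le z L.

Definition covers (x y : partition) : Prop :=
  (young_le x y /\ x <> y) /\
  forall z, (~ young_le x z \/ ~ young_le z y) \/ (z = x \/ z = y).
Definition not_covers (x y : partition) : Prop :=
  (~ young_le x y \/ x = y) \/
  exists z, (young_le x z /\ young_le z y) /\ (z <> x /\ z <> y).

Definition first_row_le (L X : partition) : Prop :=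
  forall z, (young_le p11 z \/ ~ young_le z L) \/ young_le z X.
Definition not_first_row_le (L X : partition) : Prop :=
  exists z, (~ young_le p11 z /\ young_le z L) /\ ~ young_le z X.

Lemma not_rect_inE P Q L : not_rect_in P Q L <-> ~ rect_in P Q L.
Proof.
split=> [[z [[nPz nQz] nzL]] /(_ z) [[]|] //|].
by move=> /not_all_ex_not [z /not_or_and [/not_or_and [nPz nQz] nzL]]; exists z.
Qed.

Lemma not_coversE x y : not_covers x y <-> ~ covers x y.
Proof.
split=> [[[nxy|exy]|[z [[xz zy] [zx zy']]]] [[xy nexy] between] //|].
  by case: (between z) => [[]|[]].
move=> /not_and_or [/not_and_or [nxy|/NNPP exy]|]; [by left; left | by left; right |].
move=> /not_all_ex_not [z /not_or_and [/not_or_and [/NNPP xz /NNPP zy]]].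
by move=> /not_or_and [zx zy']; right; exists z.
Qed.

Lemma not_first_row_leE L X : not_first_row_le L X <-> ~ first_row_le L X.
Proof.
split=> [[z [[nz zL] nzX]] /(_ z) [[]|] //|].
by move=> /not_all_ex_not [z /not_or_and [/not_or_and [nz /NNPP zL] nzX]]; exists z.
Qed.

(* [cell_in p q L]: L contains the (q-1) x (p-1) rectangle, i.e. its row
   q-2 has length at least p-1 (vacuous when p <= 1 or q <= 1). *)
Definition cell_in (p q : nat) (L : partition) : Prop :=
  p <= 1 \/ q <= 1 \/ p.-1 <= row L (q - 2).

(* The largest partition avoiding the row (p) and the column of height q is
   the (q-1) x (p-1) rectangle. *)
Lemma rect_in_cell p q L : rect_in (tot p) (column q) L <-> cell_in p q L.
Proof.
rewrite /cell_in; split=> [fits|cell z].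
  apply: NNPP => no_cell.
  have lt_p : 1 < p by lia.
  have lt_q : 1 < q by lia.
  have lt_L : row L (q - 2) < p.-1 by lia.
  case: (fits (rect p.-1 q.-1)) => [[]|].
  - by rewrite tot_le row_rect; case: ifP => _; lia.
  - by rewrite column_le height_rect; case: ifP => _; lia.
  - by rewrite young_leE => /(_ (q - 2)); rewrite row_rect ifT; lia.
case: (classic (young_le (tot p) z)) => [|nPz]; first by left; left.
case: (classic (young_le (column q) z)) => [|nQz]; first by left; right.
right; move: nPz nQz; rewrite tot_le column_le young_leE => nPz nQz i.
case: (ltnP i (height z)) => Hi; last by rewrite row_default.
have := row_antimono z (leq0n i); have := @row_antimono L i (q - 2).
by case: cell; lia.
Qed.

Lemma first_row_leE L X : first_row_le L X <-> row L 0 <= row X 0.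
Proof.
split=> [/(_ (tot (row L 0))) [[]|]|le_LX z].
- by move/tot_total.
- by case; rewrite tot_le.
- by rewrite tot_le.
case: (classic (young_le p11 z)) => [|/totalE ->]; first by left; left.
case: (classic (young_le (tot (row z 0)) L)) => [|]; last by left; right.
by rewrite !tot_le => zL; right; exact: leq_trans zL le_LX.
Qed.

Lemma covers_tot a b : covers (tot a) (tot b) <-> b = a.+1.
Proof.
split=> [[[le_ab ne_ab] between]|->].
  move: le_ab; rewrite tot_le row_tot0 => le_ab.
  apply: NNPP => ne_b.
  have ne : a <> b by move=> eq_ab; apply: ne_ab; rewrite eq_ab.
  case: (between (tot a.+1)) => [[]|[/tot_inj|/tot_inj]]; try lia.
  - by rewrite tot_le row_tot0.
  - by rewrite le_tot !row_tot /=; lia.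
split; first by split=> [|/tot_inj]; [rewrite tot_le row_tot0 | lia].
move=> z; case: (classic (young_le (tot a) z)) => [az|]; last by left; left.
case: (classic (young_le z (tot a.+1))) => [|]; last by left; right.
move: az; rewrite tot_le le_tot => az [za z1].
right; rewrite (totalE (proj2 (total_iff z) z1)).
have [->|->] : row z 0 = a \/ row z 0 = a.+1 by lia.
  by left.
by right.
Qed.

Lemma covers_column a b : covers (column a) (column b) <-> b = a.+1.
Proof.
split=> [[[le_ab ne_ab] between]|->].
  move: le_ab; rewrite column_le height_column => le_ab.
  apply: NNPP => ne_b.
  have ne : a <> b by move=> eq_ab; apply: ne_ab; rewrite eq_ab.
  case: (between (column a.+1)) => [[]|[/column_inj|/column_inj]]; try lia.
  - by rewrite column_le height_column.
  - by rewrite le_column row_column height_column /=; lia.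
split; first by split=> [|/column_inj]; [rewrite column_le height_column | lia].
move=> z; case: (classic (young_le (column a) z)) => [az|]; last by left; left.
case: (classic (young_le z (column a.+1))) => [|]; last by left; right.
move: az; rewrite column_le le_column => az [z0 za].
right; rewrite (columnE (proj2 (column_iff z) z0)).
have [->|->] : height z = a \/ height z = a.+1 by lia.
  by left.
by right.
Qed.

(* Under a separation condition on the variables, such a
   formula is equivalent to the prenex formula  exists (evars f), forall
   (avars f), matrix f. *)
Inductive s2form :=
| S2Qf of qf
| S2All of nat & qf
| S2Ex of nat & s2form
| S2And of s2form & s2form
| S2Or of s2form & s2form.

Fixpoint s2_sat (v : nat -> partition) (f : s2form) : Prop :=
  match f with
  | S2Qf m => qf_sat v m
  | S2All x m => forall p, qf_sat (upd v x p) m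
  | S2Ex x g => exists p, s2_sat (upd v x p) g
  | S2And g h => s2_sat v g /\ s2_sat v h
  | S2Or g h => s2_sat v g \/ s2_sat v h
  end.

Definition term_vars (t : term) : seq nat :=
  match t with TVar x => [:: x] | TConst => [::] end.

Fixpoint qf_vars (m : qf) : seq nat :=
  match m with
  | QTrue | QFalse => [::]
  | QLe a b | QEq a b => term_vars a ++ term_vars b
  | QNot g => qf_vars g
  | QAnd g h | QOr g h => qf_vars g ++ qf_vars h
  end.

Fixpoint evars (f : s2form) : seq nat :=
  match f with
  | S2Ex x g => x :: evars g
  | S2And g h | S2Or g h => evars g ++ evars h
  | _ => [::]
  end.

Fixpoint avars (f : s2form) : seq nat :=
  match f with
  | S2All x _ => [:: x]
  | S2Ex _ g => avars g
  | S2And g h | S2Or g h => avars g ++ avars h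
  | _ => [::]
  end.

Fixpoint matrix (f : s2form) : qf :=
  match f with
  | S2Qf m | S2All _ m => m
  | S2Ex _ g => matrix g
  | S2And g h => QAnd (matrix g) (matrix h)
  | S2Or g h => QOr (matrix g) (matrix h)
  end.

Definition avoids (X : seq nat) (m : qf) : bool := all (fun y => y \notin qf_vars m) X.

Fixpoint s2_wf (f : s2form) : bool :=
  match f with
  | S2Ex _ g => s2_wf g
  | S2And g h | S2Or g h =>
      [&& s2_wf g, s2_wf h, avoids (evars g ++ avars g) (matrix h)
        & avoids (evars h ++ avars h) (matrix g)]
  | _ => true
  end.

Lemma avoidsP X m y : avoids X m -> y \in qf_vars m -> y \notin X.
Proof. by move=> /allP avoid_m y_m; apply/negP => /avoid_m; rewrite y_m. Qed.

Lemma avoids_cat E A m y :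
  avoids (E ++ A) m -> y \in qf_vars m -> (y \notin E) && (y \notin A).
Proof. by move=> /avoidsP avoid_m /avoid_m; rewrite mem_cat negb_or. Qed.

Lemma qf_sat_agree v w m :
  {in qf_vars m, v =1 w} -> (qf_sat v m <-> qf_sat w m).
Proof.
have term_agree t : {in term_vars t, v =1 w} -> eval_term v t = eval_term w t.
  by case: t => [x|] //= vw; apply: vw; exact: mem_head.
have split_agree s1 s2 : {in s1 ++ s2, v =1 w} -> {in s1, v =1 w} /\ {in s2, v =1 w}.
  by move=> vw; split=> y y_in; apply: vw; rewrite mem_cat y_in ?orbT.
elim: m => [||a b|a b|g IH|g IHg h IHh|g IHg h IHh] //= vw;
  try case/split_agree: vw => vw1 vw2.
- by rewrite (term_agree a) ?(term_agree b).
- by rewrite (term_agree a) ?(term_agree b).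
- by rewrite IH.
- by rewrite IHg ?IHh.
- by rewrite IHg ?IHh.
Qed.

Definition agree_off (X : seq nat) (w v : nat -> partition) : Prop :=
  forall y, y \notin X -> w y = v y.

Definition patch (X : seq nat) (w' w : nat -> partition) : nat -> partition :=
  fun y => if y \in X then w' y else w y.

Lemma patch_agree X w' w : agree_off X (patch X w' w) w.
Proof. by move=> y /negbTE y_X; rewrite /patch y_X. Qed.

Lemma patch2_agree X1 X2 w1 w2 w : agree_off (X1 ++ X2) (patch X1 w1 (patch X2 w2 w)) w.
Proof.
by move=> y; rewrite mem_cat negb_or => /andP [/negbTE y_X1 /negbTE y_X2]; rewrite /patch y_X1 y_X2.
Qed.

Lemma mem_cat_notin_r (X1 X2 : seq nat) y : y \notin X2 -> (y \in X1 ++ X2) = (y \in X1).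
Proof. by rewrite mem_cat => /negbTE ->; rewrite orbF. Qed.

Lemma mem_cat_notin_l (X1 X2 : seq nat) y : y \notin X1 -> (y \in X1 ++ X2) = (y \in X2).
Proof. by rewrite mem_cat => /negbTE ->. Qed.

Definition all_sat (A : seq nat) (m : qf) (w : nat -> partition) : Prop :=
  forall w', agree_off A w' w -> qf_sat w' m.

Definition ea_sat (E A : seq nat) (m : qf) (v : nat -> partition) : Prop :=
  exists2 w, agree_off E w v & all_sat A m w.

Lemma all_sat_transfer A A' m w w' :
  {in qf_vars m, w =1 w'} -> {in qf_vars m, forall y, y \in A' -> y \in A} ->
  all_sat A m w -> all_sat A' m w'.
Proof.
move=> ww' AA' m_all w'' agree''.
apply/(qf_sat_agree (w := patch A w'' w)); last by apply: m_all; exact: patch_agree.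
move=> y y_m; rewrite /patch; case: ifP => // y_A.
by rewrite agree'' ?(ww' y y_m) //; apply: contraFN y_A; exact: AA'.
Qed.

Lemma ea_transfer E A E' A' m v :
  {in qf_vars m, forall y, y \in E -> y \in E'} ->
  {in qf_vars m, forall y, y \in A' -> y \in A} ->
  ea_sat E A m v -> ea_sat E' A' m v.
Proof.
move=> EE' AA' [w agree_w m_all]; exists (patch E' w v); first exact: patch_agree.
apply: all_sat_transfer AA' m_all => y y_m; rewrite /patch; case: ifP => // y_E'.
by rewrite agree_w //; apply: contraFN y_E'; exact: EE'.
Qed.

Lemma ea_mono E A m m' v :
  (forall w, qf_sat w m -> qf_sat w m') -> ea_sat E A m v -> ea_sat E A m' v.
Proof. by move=> mm' [w agree_w m_all]; exists w => // w' /m_all /mm'. Qed.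

Section Combination.
Variables (E1 A1 E2 A2 : seq nat) (m1 m2 : qf).
Hypothesis sep12 : avoids (E1 ++ A1) m2.
Hypothesis sep21 : avoids (E2 ++ A2) m1.

Lemma ea_weaken_l v : ea_sat E1 A1 m1 v -> ea_sat (E1 ++ E2) (A1 ++ A2) m1 v.
Proof.
apply: ea_transfer => y y_m; first by rewrite mem_cat => ->.
by case/andP: (avoids_cat sep21 y_m) => _ y_A2; rewrite mem_cat_notin_r.
Qed.

Lemma ea_weaken_r v : ea_sat E2 A2 m2 v -> ea_sat (E1 ++ E2) (A1 ++ A2) m2 v.
Proof.
apply: ea_transfer => y y_m; first by rewrite mem_cat orbC => ->.
by case/andP: (avoids_cat sep12 y_m) => _ y_A1; rewrite mem_cat_notin_l.
Qed.

Lemma ea_restrict_l A A' v :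
  {subset A' <= A} -> ea_sat (E1 ++ E2) A m1 v -> ea_sat E1 A' m1 v.
Proof.
move=> AA'; apply: ea_transfer => y y_m; last exact: AA'.
by case/andP: (avoids_cat sep21 y_m) => y_E2 _; rewrite mem_cat_notin_r.
Qed.

Lemma ea_restrict_r A A' v :
  {subset A' <= A} -> ea_sat (E1 ++ E2) A m2 v -> ea_sat E2 A' m2 v.
Proof.
move=> AA'; apply: ea_transfer => y y_m; last exact: AA'.
by case/andP: (avoids_cat sep12 y_m) => y_E1 _; rewrite mem_cat_notin_l.
Qed.

(* Independent universal blocks distribute over a disjunction: two separate
   counterexamples merge into one. *)
Lemma all_sat_or w :
  all_sat (A1 ++ A2) (QOr m1 m2) w -> all_sat A1 m1 w \/ all_sat A2 m2 w.
Proof.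
move=> or_all; apply: NNPP => /not_or_and [].
move=> /not_all_ex_not [w1 /(imply_to_and (agree_off _ _ _)) [agree1 not_m1]].
move=> /not_all_ex_not [w2 /(imply_to_and (agree_off _ _ _)) [agree2 not_m2]].
set w' := patch A1 w1 (patch A2 w2 w).
case: (or_all w' (@patch2_agree A1 A2 w1 w2 w)) => /= [m1_w'|m2_w'].
- apply/not_m1/(qf_sat_agree (v := w')) => // y y_m.
  case/andP: (avoids_cat sep21 y_m) => _ y_A2; rewrite /w' /patch (negbTE y_A2).
  by case: ifP => // /negbT y_A1; rewrite agree1.
- apply/not_m2/(qf_sat_agree (v := w')) => // y y_m.
  case/andP: (avoids_cat sep12 y_m) => _ y_A1; rewrite /w' /patch (negbTE y_A1).
  by case: ifP => // /negbT y_A2; rewrite agree2.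
Qed.

Lemma ea_or v :
  ea_sat (E1 ++ E2) (A1 ++ A2) (QOr m1 m2) v <-> ea_sat E1 A1 m1 v \/ ea_sat E2 A2 m2 v.
Proof.
split=> [[w agree_w /all_sat_or [m1_all|m2_all]]|[/ea_weaken_l|/ea_weaken_r]].
- by left; apply: (ea_restrict_l (A := A1)); last exists w.
- by right; apply: (ea_restrict_r (A := A2)); last exists w.
- by apply: ea_mono => w m1_w; left.
- by apply: ea_mono => w m2_w; right.
Qed.

(* Two existential witnesses with disjoint relevant variables merge into one. *)
Lemma ea_and v :
  ea_sat (E1 ++ E2) (A1 ++ A2) (QAnd m1 m2) v <-> ea_sat E1 A1 m1 v /\ ea_sat E2 A2 m2 v.
Proof.
have sub_l : {subset A1 <= A1 ++ A2} by move=> y y_A; rewrite mem_cat y_A.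
have sub_r : {subset A2 <= A1 ++ A2} by move=> y y_A; rewrite mem_cat y_A orbT.
split=> [and_sat|[[w1 agree1 m1_all] [w2 agree2 m2_all]]].
  by split; [apply: ea_restrict_l sub_l _ | apply: ea_restrict_r sub_r _];
    apply: ea_mono and_sat => w [].
set w := patch E1 w1 (patch E2 w2 v); exists w; first exact: patch2_agree.
have all1 : all_sat (A1 ++ A2) m1 w.
  apply: all_sat_transfer m1_all => y y_m; case/andP: (avoids_cat sep21 y_m) => y_E2 y_A2.
    by rewrite /w /patch (negbTE y_E2); case: ifP => // /negbT y_E1; rewrite agree1.
  by rewrite mem_cat_notin_r.
have all2 : all_sat (A1 ++ A2) m2 w.
  apply: all_sat_transfer m2_all => y y_m; case/andP: (avoids_cat sep12 y_m) => y_E1 y_A1.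
    by rewrite /w /patch (negbTE y_E1); case: ifP => // /negbT y_E2; rewrite agree2.
  by rewrite mem_cat_notin_l.
by move=> w' agree'; split; [apply: all1 | apply: all2].
Qed.
End Combination.

Lemma ea_ex x E A m v :
  ea_sat (x :: E) A m v <-> exists p, ea_sat E A m (upd v x p).
Proof.
split=> [[w agree_w m_all]|[p [w agree_w m_all]]].
  exists (w x); exists w => // y y_E; rewrite /upd; case: eqP => [->//|/eqP y_x].
  by rewrite agree_w // in_cons negb_or y_x.
exists w => // y; rewrite in_cons negb_or => /andP [y_x y_E].
by rewrite agree_w // /upd (negbTE y_x).
Qed.

Lemma ea_qf m v : ea_sat [::] [::] m v <-> qf_sat v m.
Proof.
split=> [[w agree_w m_all]|m_v].
  by apply/(qf_sat_agree (v := w)) => [y _|]; [exact: agree_w | exact: m_all].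
by exists v => // w' agree'; apply/(qf_sat_agree (v := v)) => // y _; rewrite agree'.
Qed.

Lemma ea_all x m v : ea_sat [::] [:: x] m v <-> forall p, qf_sat (upd v x p) m.
Proof.
split=> [[w agree_w m_all] p|m_all].
  apply: m_all => y; rewrite in_cons orbF => y_x.
  by rewrite /upd (negbTE y_x) agree_w.
exists v => // w' agree'; apply/(qf_sat_agree (v := upd v x (w' x))) => [y _|//].
by rewrite /upd; case: eqP => [->//|/eqP y_x]; rewrite agree' // in_cons orbF.
Qed.

Theorem s2_prenex f v : s2_wf f -> (s2_sat v f <-> ea_sat (evars f) (avars f) (matrix f) v).
Proof.
elim: f v => [m|x m|x g IH|g IHg h IHh|g IHg h IHh] v /=.
- by rewrite ea_qf.
- by rewrite ea_all.
- by move=> wf_g; rewrite ea_ex; split=> -[p /IH gp]; exists p; apply/gp.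
- case/and4P => wf_g wf_h sep_gh sep_hg; rewrite ea_and //.
  by rewrite (IHg _ wf_g) (IHh _ wf_h).
- case/and4P => wf_g wf_h sep_gh sep_hg; rewrite ea_or //.
  by rewrite (IHg _ wf_g) (IHh _ wf_h).
Qed.

Lemma quant_block_all b v K :
  quant_block true b v K <-> forall w, agree_off b w v -> K w.
Proof.
elim: b v => [|x b IH] v /=.
  split=> [Kv w agree_w|]; last by apply.
  by have -> : w = v by apply: functional_extensionality => y; exact: agree_w.
split=> [Kb w agree_w|Kw p].
  move: (Kb (w x)); rewrite IH; apply=> y y_b; rewrite /upd; case: eqP => [->//|/eqP y_x].
  by rewrite agree_w // in_cons negb_or y_x.
rewrite IH => w agree_w; apply: Kw => y; rewrite in_cons negb_or => /andP [y_x y_b].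
by rewrite agree_w // /upd (negbTE y_x).
Qed.

Lemma quant_block_ex b v K :
  quant_block false b v K <-> exists2 w, agree_off b w v & K w.
Proof.
elim: b v => [|x b IH] v /=.
  split=> [Kv|[w agree_w Kw]]; first by exists v.
  by have <- : w = v by apply: functional_extensionality => y; exact: agree_w.
split=> [[p]|[w agree_w Kw]].
  rewrite IH => -[w agree_w Kw]; exists w => // y; rewrite in_cons negb_or.
  by case/andP=> y_x y_b; rewrite agree_w // /upd (negbTE y_x).
exists (w x); rewrite IH; exists w => // y y_b; rewrite /upd; case: eqP => [->//|/eqP y_x].
by rewrite agree_w // in_cons negb_or y_x.
Qed.

Lemma pi3_prenex G f v : s2_wf f ->
  (prenex_sat true [:: G; evars f; avars f] (matrix f) v <->
   forall w, agree_off G w v -> s2_sat w f).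
Proof.
move=> wf_f /=; rewrite quant_block_all.
split=> sat w /sat; rewrite quant_block_ex (s2_prenex _ wf_f).
  by case=> w' agree_w' /quant_block_all; exists w'.
by case=> w' agree_w' all_w'; exists w' => //; apply/quant_block_all.
Qed.

(* Free variables: 0 = rho, 1 = sigma, 2 = pi.  The
   auxiliary variables 3..10, universally quantified in front, are intended
   to be  t = (2),  s = (k+1),  S = staircase (k+1),  Q = column (k+1),
   Dm = staircase m,  DM = staircase (m k + k),  D' = staircase (m k + 1)
   and mu = arith_staircase m k, where rho = (m) and sigma = (k).  The formula
   says: rho, sigma, pi are total, and either some auxiliary variable is not
   the intended one (a Sigma_2 condition), or pi = (m k), read off the first
   row of mu (or pi = (0) when k = 0).  All other variables are bound. *)
Local Notation V := TVar.

Definition f_rect_in (P Q L : term) (z : nat) : s2form :=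
  S2All z (QOr (QOr (QLe P (V z)) (QLe Q (V z))) (QLe (V z) L)).
Definition f_not_rect_in (P Q L : term) (z : nat) : s2form :=
  S2Ex z (S2Qf (QAnd (QAnd (QNot (QLe P (V z))) (QNot (QLe Q (V z)))) (QNot (QLe (V z) L)))).
Definition f_covers (x y : term) (z : nat) : s2form :=
  S2And (S2Qf (QAnd (QLe x y) (QNot (QEq x y))))
    (S2All z (QOr (QOr (QNot (QLe x (V z))) (QNot (QLe (V z) y)))
                  (QOr (QEq (V z) x) (QEq (V z) y)))).
Definition f_not_covers (x y : term) (z : nat) : s2form :=
  S2Or (S2Qf (QOr (QNot (QLe x y)) (QEq x y)))
    (S2Ex z (S2Qf (QAnd (QAnd (QLe x (V z)) (QLe (V z) y))
                        (QAnd (QNot (QEq (V z) x)) (QNot (QEq (V z) y)))))).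
Definition f_first_row_le (L X : term) (z : nat) : s2form :=
  S2All z (QOr (QOr (QLe TConst (V z)) (QNot (QLe (V z) L))) (QLe (V z) X)).
Definition f_not_first_row_le (L X : term) (z : nat) : s2form :=
  S2Ex z (S2Qf (QAnd (QAnd (QNot (QLe TConst (V z))) (QLe (V z) L)) (QNot (QLe (V z) X)))).

Fixpoint qands (s : seq qf) : qf :=
  match s with [::] => QTrue | [:: a] => a | a :: s => QAnd a (qands s) end.

(* D is not a staircase: some row of D does not shrink by exactly one; the
   witnesses are totals P, P' = P+1 and columns Q, Q' = Q+1 (t = (2)). *)
Definition f_not_staircase (t D : term) (b : nat) : s2form :=
  let P := V b in let P' := V b.+1 in let Q := V b.+2 in let Q' := V b.+3 in
  S2Ex b (S2Ex b.+1 (S2Ex b.+2 (S2Ex b.+3 (S2And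
   (S2And (S2Qf (QAnd (QAnd (QAnd (QNot (QLe TConst P)) (QNot (QLe TConst P'))) (QLe t P))
                      (QAnd (QAnd (QNot (QLe t Q)) (QNot (QLe t Q'))) (QLe TConst Q))))
          (S2And (f_covers P P' (b + 4)) (f_covers Q Q' (b + 5))))
   (S2And (f_rect_in P Q D (b + 6))
          (S2Or (S2And (f_rect_in P Q' D (b + 7)) (f_not_rect_in P' Q D (b + 8)))
                (S2And (f_not_rect_in P Q' D (b + 9)) (f_rect_in P' Q D (b + 10))))))))).

(* D is not the staircase of height (row x 0). *)
Definition f_not_staircase_of (t x D : term) (b b' : nat) : s2form :=
  S2Or (f_not_staircase t D b) (S2Or (S2Qf (QNot (QLe x D))) (f_not_first_row_le D x b')).

Definition vR := V 0. Definition vS := V 1. Definition vPi := V 2. Definition vt := V 3.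
Definition vs := V 4. Definition vSt := V 5. Definition vQ := V 6. Definition vDm := V 7.
Definition vDM := V 8. Definition vD' := V 9. Definition vmu := V 10.

Definition f_not_two : s2form :=
  S2Or (S2Qf (QOr (QLe TConst vt) (QLe vt TConst)))
    (S2Ex 100 (S2Qf (QAnd (QAnd (QNot (QLe TConst (V 100))) (QNot (QLe (V 100) TConst)))
                          (QNot (QLe vt (V 100)))))).
Definition f_not_succ : s2form := S2Or (S2Qf (QLe TConst vs)) (f_not_covers vS vs 110).
Definition f_not_column : s2form :=
  S2Or (S2Qf (QOr (QLe vt vQ) (QNot (QLe vQ vSt))))
    (S2Ex 130 (S2Qf (QAnd (QAnd (QNot (QLe vt (V 130))) (QLe (V 130) vSt))
                          (QNot (QLe (V 130) vQ))))).
Definition f_not_shift : s2form :=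
  S2Ex 160 (S2And (S2Qf (QNot (QLe TConst (V 160))))
    (S2Or (S2And (f_rect_in (V 160) TConst vD' 161) (f_not_rect_in (V 160) vQ vDM 162))
          (S2And (f_not_rect_in (V 160) TConst vD' 163) (f_rect_in (V 160) vQ vDM 164)))).
Definition f_height_mismatch : s2form :=
  S2Ex 170 (S2Qf (QAnd (QNot (QLe vt (V 170)))
    (QOr (QAnd (QLe (V 170) vmu) (QNot (QLe (V 170) vDm)))
         (QAnd (QNot (QLe (V 170) vmu)) (QLe (V 170) vDm))))).
Definition f_short_row : s2form :=
  S2Ex 180 (S2And (S2Qf (QNot (QLe vt (V 180))))
    (S2And (f_rect_in vt (V 180) vmu 181) (f_not_rect_in vs (V 180) vmu 182))).
Definition f_bad_step : s2form :=
  let H := V 300 in let H' := V 301 in let W := V 302 in let W' := V 303 in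
  let I := V 304 in let X := V 305 in let X' := V 306 in let U := V 307 in
  let U' := V 308 in
  S2Ex 300 (S2Ex 301 (S2Ex 302 (S2Ex 303 (S2Ex 304 (S2Ex 305 (S2Ex 306 (S2Ex 307 (S2Ex 308
  (S2And
    (S2And (S2Qf (qands [:: QNot (QLe vt H); QNot (QLe vt H'); QNot (QLe TConst W);
                           QNot (QLe TConst W'); QLe vt W; QNot (QLe vt I);
                           QNot (QLe TConst X); QNot (QLe TConst X'); QNot (QLe TConst U);
                           QNot (QLe TConst U')]))
      (S2And (f_covers H H' 310) (S2And (f_covers W W' 311)
        (S2And (f_covers X X' 312) (f_covers U U' 313)))))
    (S2And
      (S2And (f_rect_in W H vmu 320) (S2And (f_not_rect_in W' H vmu 321)
        (S2And (f_rect_in W I vDM 322) (S2And (f_not_rect_in W' I vDM 323)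
        (S2And (f_rect_in X H' vmu 324) (S2And (f_not_rect_in X' H' vmu 325)
        (S2And (f_rect_in U I vD' 326) (f_not_rect_in U' I vD' 327))))))))
      (S2Qf (QNot (QEq X' U))))))))))))).
Definition f_not_product : s2form :=
  S2And (S2Qf (QLe vt vs)) (S2Or (f_not_staircase vt vDM 240) (S2Or (f_not_staircase vt vD' 260)
    (S2Or f_not_shift (S2Or (f_not_first_row_le vmu vDM 150)
    (S2Or f_height_mismatch (S2Or f_short_row f_bad_step)))))).
Definition f_not_aux : s2form :=
  S2Or f_not_two (S2Or f_not_succ (S2Or (f_not_staircase_of vt vs vSt 200 120)
    (S2Or f_not_column (S2Or (f_not_staircase_of vt vR vDm 220 140) f_not_product)))).
Definition f_product : s2form :=
  S2And (S2Or (S2Qf (QNot (QLe vt vs))) (S2And (S2Qf (QLe vPi vmu)) (f_first_row_le vmu vPi 190)))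
        (S2Qf (QOr (QLe vt vs) (QLe vPi vS))).
Definition f_main : s2form :=
  S2And (S2Qf (QAnd (QAnd (QNot (QLe TConst vR)) (QNot (QLe TConst vS))) (QNot (QLe TConst vPi))))
        (S2Or f_not_aux f_product).

Lemma f_main_wf : s2_wf f_main.
Proof. by vm_compute. Qed.

(* Semantics of the pieces of the formula, exactly as [s2_sat] computes them.
   D is not a staircase (see [not_staircaseE]). *)
Definition not_staircase (t D : partition) : Prop := exists P P' Q Q',
  ((((~ young_le p11 P /\ ~ young_le p11 P') /\ young_le t P) /\
    ((~ young_le t Q /\ ~ young_le t Q') /\ young_le p11 Q)) /\
   (covers P P' /\ covers Q Q')) /\
  (rect_in P Q D /\ ((rect_in P Q' D /\ not_rect_in P' Q D) \/
                     (not_rect_in P Q' D /\ rect_in P' Q D))).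
Definition not_staircase_of (t x D : partition) : Prop :=
  not_staircase t D \/ (~ young_le x D \/ not_first_row_le D x).
(* t is not (2), the least total partition not below (1,1). *)
Definition not_two (t : partition) : Prop :=
  (young_le p11 t \/ young_le t p11) \/
  exists z, (~ young_le p11 z /\ ~ young_le z p11) /\ ~ young_le t z.
(* s is not the total partition covering the total partition a. *)
Definition not_succ (a s : partition) : Prop := young_le p11 s \/ not_covers a s.
(* Q is not the largest column below S. *)
Definition not_column (t S Q : partition) : Prop :=
  (young_le t Q \/ ~ young_le Q S) \/
  exists z, (~ young_le t z /\ young_le z S) /\ ~ young_le z Q.
(* The first row of D' and row (height Q - 2) of DM have different lengths. *)
Definition not_shift (Q DM D' : partition) : Prop := exists P, ~ young_le p11 P /\
  ((rect_in P p11 D' /\ not_rect_in P Q DM) \/ (not_rect_in P p11 D' /\ rect_in P Q DM)).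
(* mu and Dm have different heights. *)
Definition height_mismatch (t Dm mu : partition) : Prop := exists z, ~ young_le t z /\
  ((young_le z mu /\ ~ young_le z Dm) \/ (~ young_le z mu /\ young_le z Dm)).
(* Some nonempty row of mu is shorter than row s - 1. *)
Definition short_row (t s mu : partition) : Prop :=
  exists Q, ~ young_le t Q /\ (rect_in t Q mu /\ not_rect_in s Q mu).
(* Two consecutive rows of mu differ by an amount other than the one read off
   from DM and D' (see [bad_stepE]). *)
Definition bad_step (t DM D' mu : partition) : Prop := exists H H' W W' I X X' U U',
  ((~ young_le t H /\ (~ young_le t H' /\ (~ young_le p11 W /\ (~ young_le p11 W' /\
    (young_le t W /\ (~ young_le t I /\ (~ young_le p11 X /\ (~ young_le p11 X' /\
    (~ young_le p11 U /\ ~ young_le p11 U'))))))))) /\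
   (covers H H' /\ (covers W W' /\ (covers X X' /\ covers U U')))) /\
  ((rect_in W H mu /\ (not_rect_in W' H mu /\ (rect_in W I DM /\ (not_rect_in W' I DM /\
    (rect_in X H' mu /\ (not_rect_in X' H' mu /\ (rect_in U I D' /\ not_rect_in U' I D'))))))) /\
   X' <> U).
(* For k > 0: DM, D' or mu is not the intended partition. *)
Definition not_product (t s Q Dm DM D' mu : partition) : Prop :=
  young_le t s /\ (not_staircase t DM \/ (not_staircase t D' \/ (not_shift Q DM D' \/
  (not_first_row_le mu DM \/ (height_mismatch t Dm mu \/ (short_row t s mu \/
   bad_step t DM D' mu)))))).
Definition not_aux (rh sg t s S Q Dm DM D' mu : partition) : Prop :=
  not_two t \/ (not_succ sg s \/ (not_staircase_of t s S \/ (not_column t S Q \/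
  (not_staircase_of t rh Dm \/ not_product t s Q Dm DM D' mu)))).
(* pi = (row mu 0) when k > 0, and pi = (0) when k = 0. *)
Definition product_body (sg pi t s mu : partition) : Prop :=
  (~ young_le t s \/ (young_le pi mu /\ first_row_le mu pi)) /\ (young_le t s \/ young_le pi sg).
Definition main_sem (rh sg pi t s S Q Dm DM D' mu : partition) : Prop :=
  ((~ young_le p11 rh /\ ~ young_le p11 sg) /\ ~ young_le p11 pi) /\
  (not_aux rh sg t s S Q Dm DM D' mu \/ product_body sg pi t s mu).

Lemma f_main_sat v :
  s2_sat v f_main <-> main_sem (v 0) (v 1) (v 2) (v 3) (v 4) (v 5) (v 6) (v 7) (v 8) (v 9) (v 10).
Proof. by []. Qed.

Lemma not_twoE t : not_two t <-> t <> tot 2.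
Proof.
split=> [bad t2|ne_t2]; first (subst t; case: bad => [[p11t|tp11]|[z [[nz nzp11] ntz]]]).
- exact: tot_total p11t.
- by move: tp11; rewrite tot_le p11_column row_column.
- have [a za] := totalP nz; move: nzp11 ntz.
  by rewrite za !tot_le p11_column row_column row_tot0 /=; lia.
apply: NNPP => /not_or_and [/not_or_and [np11t ntp11] nex]; apply: ne_t2.
case: (totalP np11t) => a ta; subst t; congr tot.
move: ntp11; rewrite tot_le p11_column row_column /= => lt1a.
have : young_le (tot a) (tot 2).
  apply: NNPP => nle; apply: nex; exists (tot 2); split=> //.
  by split; [exact: tot_total | rewrite tot_le p11_column row_column].
by rewrite tot_le row_tot0; lia.
Qed.

Lemma not_succE a s : not_succ (tot a) s <-> s <> tot a.+1.
Proof.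
rewrite /not_succ not_coversE; split=> [[p11s|ncov] sa|ne_s].
- by move: p11s; rewrite sa; exact: tot_total.
- by apply: ncov; rewrite sa covers_tot.
apply: NNPP => /not_or_and [np11s /NNPP].
by rewrite (totalE np11s) covers_tot => sa; apply: ne_s; rewrite (totalE np11s) sa.
Qed.

Lemma not_columnE S Q : not_column (tot 2) S Q <-> Q <> column (height S).
Proof.
split=> [bad QS|ne_Q]; first (subst Q; case: bad => [[tQ|nQS]|[z [[nz zS] nzQ]]]).
- exact: column_column tQ.
- by apply: nQS; rewrite column_le.
- have [q zq] := columnP nz; move: zS nzQ; rewrite zq !column_le height_column.
  by move=> hq; apply.
apply: NNPP => /not_or_and [/not_or_and [ntQ /NNPP QS] nex]; apply: ne_Q.
rewrite (columnE ntQ); congr column; apply/eqP; rewrite eqn_leq.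
move: QS; rewrite {1}(columnE ntQ) column_le => -> /=.
apply/column_le; apply: NNPP => nle; apply: nex.
exists (column (height S)); split=> //; split; first exact: column_column.
by rewrite column_le.
Qed.

Lemma not_staircaseE D : not_staircase (tot 2) D <->
  exists j w, [/\ 0 < w, w <= row D j & ~ (w <= row D j.+1 <-> w < row D j)].
Proof.
split=> [[P [P' [Q [Q' bad]]]]|].
  move: bad => [[[[[nP nP'] tP] [[nQ nQ'] p11Q]] [PP' QQ']] [PQ steps]].
  have [p Pp] := totalP nP; have [p' P'p] := totalP nP'; subst P P'.
  have [q Qq] := columnP nQ; have [q' Q'q] := columnP nQ'; subst Q Q'.
  move: PP' QQ' tP p11Q PQ steps => /covers_tot -> /covers_column -> /tot_le.
  rewrite row_tot0 p11_le height_column !not_rect_inE !rect_in_cell /cell_in.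
  move=> p_ge2 q_ge2 PQ steps.
  exists (q - 2), p.-1; rewrite -subSn //; split; lia.
move=> [j [w [w_gt0 w_le steps]]].
exists (tot w.+1), (tot w.+2), (column j.+2), (column j.+3).
split; [split; [split; [split; [split|]|split; [split|]]|split]|split].
- exact: tot_total.
- exact: tot_total.
- by rewrite tot_le row_tot0.
- exact: column_column.
- exact: column_column.
- by rewrite p11_le height_column.
- by rewrite covers_tot.
- by rewrite covers_column.
- by rewrite rect_in_cell /cell_in subn2 /=; lia.
rewrite !not_rect_inE !rect_in_cell /cell_in !subn2 /=.
by case: (leqP w (row D j.+1)) => fits; [left | right]; split; lia.
Qed.

Lemma staircase_good n : ~ not_staircase (tot 2) (staircase n).
Proof. by case/not_staircaseE=> j [w []]; rewrite !row_staircase; lia. Qed.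

Lemma staircase_rows D : ~ not_staircase (tot 2) D -> forall i, row D i = row D 0 - i.
Proof.
move=> good; have step j : row D j.+1 = row D j - 1.
  have cell w : 0 < w -> w <= row D j -> (w <= row D j.+1 <-> w < row D j).
    move=> w_gt0 w_le; apply: NNPP => bad; apply: good.
    by apply/not_staircaseE; exists j, w.
  have := row_antimono D (leqnSn j); case: (posnP (row D j)) => [->|pos]; first lia.
  have [shrinks _] := cell _ pos (leqnn _).
  case: (leqP (row D j) 1) => [le1|gt1] mono; first by have := contra_not shrinks; lia.
  have [_ keeps] := cell (row D j).-1 ltac:(lia) ltac:(lia).
  have := keeps ltac:(lia); have := contra_not shrinks; lia.
by elim=> [|i IH]; rewrite ?subn0 // step IH; lia.
Qed.

Lemma staircaseE D : (forall i, row D i = row D 0 - i) -> D = staircase (row D 0).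
Proof. by move=> rows; apply: partition_ext => i; rewrite rows row_staircase. Qed.

Lemma not_staircase_ofE n D : not_staircase_of (tot 2) (tot n) D <-> D <> staircase n.
Proof.
split=> [bad Dn|ne_D]; first (subst D; case: bad => [|[]]).
- exact: staircase_good.
- by move=> nle; apply: nle; rewrite tot_le row_staircase subn0.
- by move/not_first_row_leE => nle; apply: nle; rewrite first_row_leE row_staircase row_tot0 subn0.
apply: NNPP => /not_or_and [good /not_or_and [/NNPP nD /not_first_row_leE /NNPP]].
move: nD; rewrite first_row_leE tot_le row_tot0 => nD Dn; apply: ne_D.
by rewrite (staircaseE (staircase_rows good)); congr staircase; lia.
Qed.

Lemma row_exactE p q L :
  rect_in (tot p) (column q) L /\ not_rect_in (tot p.+1) (column q) L <->
  [/\ 0 < p, 1 < q & row L (q - 2) = p.-1].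
Proof.
rewrite not_rect_inE !rect_in_cell /cell_in.
by split=> [[fits nfits]|[p_gt0 q_gt1 row_eq]]; split; lia.
Qed.

Lemma not_shiftE q DM D' :
  not_shift (column q) DM D' <-> exists p, ~ (cell_in p 2 D' <-> cell_in p q DM).
Proof.
split=> [[P [nP cells]]|[p cells]].
  have [p Pp] := totalP nP; subst P; exists p.
  by move: cells; rewrite p11_column !not_rect_inE !rect_in_cell; tauto.
exists (tot p); split; first exact: tot_total.
by rewrite p11_column !not_rect_inE !rect_in_cell; tauto.
Qed.

Lemma height_mismatchE Dm mu :
  height_mismatch (tot 2) Dm mu <-> exists q, ~ (q <= height mu <-> q <= height Dm).
Proof.
split=> [[z [nz sizes]]|[q sizes]].
  have [q zq] := columnP nz; subst z; exists q.
  by move: sizes; rewrite !column_le; tauto.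
exists (column q); split; first exact: column_column.
by rewrite !column_le; tauto.
Qed.

Lemma short_rowE k mu :
  short_row (tot 2) (tot k) mu <-> exists q, cell_in 2 q mu /\ ~ cell_in k q mu.
Proof.
split=> [[Q [nQ cells]]|[q cells]].
  have [q Qq] := columnP nQ; subst Q; exists q.
  by move: cells; rewrite not_rect_inE !rect_in_cell.
exists (column q); split; first exact: column_column.
by rewrite not_rect_inE !rect_in_cell.
Qed.

Lemma bad_stepE DM D' mu : bad_step (tot 2) DM D' mu <->
  exists j a, [/\ 0 < row mu j, row DM a = row mu j & (row mu j.+1).+1 <> row D' a].
Proof.
split=> [[H [H' [W [W' [I [X [X' [U [U' bad]]]]]]]]]|[j [a [pos DMa next]]]].
  move: bad => [[[nH [nH' [nW [nW' [tW [nI [nX [nX' [nU nU']]]]]]]]] [HH' [WW' [XX' UU']]]]].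
  move=> [[rW [rW' [rI [rI' [rX [rX' [rU rU']]]]]]] ne_XU].
  have [h eqH] := columnP nH; have [h' eqH'] := columnP nH'; have [i eqI] := columnP nI.
  have [w eqW] := totalP nW; have [w' eqW'] := totalP nW'; have [x eqX] := totalP nX.
  have [x' eqX'] := totalP nX'; have [u eqU] := totalP nU; have [u' eqU'] := totalP nU'.
  subst H H' I W W' X X' U U'.
  move/covers_column: HH' => eqh'; move/covers_tot: WW' => eqw'.
  move/covers_tot: XX' => eqx'; move/covers_tot: UU' => equ'; subst h' w' x' u'.
  have [w_gt0 h_gt1 mu_h] := proj1 (row_exactE _ _ _) (conj rW rW').
  have [_ i_gt1 DM_i] := proj1 (row_exactE _ _ _) (conj rI rI').
  have [x_gt0 _ mu_h'] := proj1 (row_exactE _ _ _) (conj rX rX').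
  have [u_gt0 _ D'_i] := proj1 (row_exactE _ _ _) (conj rU rU').
  move: tW; rewrite tot_le row_tot0 => w_gt1.
  exists (h - 2), (i - 2); split; first by rewrite mu_h; lia.
    by rewrite DM_i mu_h.
  have -> : (h - 2).+1 = h.+1 - 2 by lia.
  by rewrite mu_h' D'_i => eq_xu; apply: ne_XU; congr tot; lia.
set r := row mu j; set r' := row mu j.+1; set d := row D' a.
have cells p q L : 0 < p -> 1 < q -> row L (q - 2) = p.-1 ->
  rect_in (tot p) (column q) L /\ not_rect_in (tot p.+1) (column q) L.
  by move=> *; apply/row_exactE.
have [rW rW'] := cells r.+1 j.+2 mu isT isT ltac:(by rewrite subn2).
have [rI rI'] := cells r.+1 a.+2 DM isT isT ltac:(by rewrite subn2 /= DMa).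
have [rX rX'] := cells r'.+1 j.+3 mu isT isT ltac:(by rewrite subn2).
have [rU rU'] := cells d.+1 a.+2 D' isT isT ltac:(by rewrite subn2).
exists (column j.+2), (column j.+3), (tot r.+1), (tot r.+2), (column a.+2),
  (tot r'.+1), (tot r'.+2), (tot d.+1), (tot d.+2).
have tW : young_le (tot 2) (tot r.+1) by rewrite tot_le row_tot0.
have ne_XU : tot r'.+2 <> tot d.+1 by move/tot_inj => [].
have cH : covers (column j.+2) (column j.+3) by rewrite covers_column.
have cW : covers (tot r.+1) (tot r.+2) by rewrite covers_tot.
have cX : covers (tot r'.+1) (tot r'.+2) by rewrite covers_tot.
have cU : covers (tot d.+1) (tot d.+2) by rewrite covers_tot.
by do ![assumption | exact: column_column | exact: tot_total | split].
Qed.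

Lemma arith_progression (f : nat -> nat) m k :
  (forall j, (0 < f j) = (j < m)) ->
  (forall j, 0 < f j -> k <= f j /\ f j.+1 = f j - k) -> f 0 = m * k.
Proof.
move=> pos step.
have top d : d <= m -> f (m - d) = d * k.
  elim: d => [|d IH] le_dm.
    by rewrite subn0 mul0n; apply/eqP; rewrite -leqn0 leqNgt pos ltnn.
  have [ge_k next] := step (m - d.+1) ltac:(by rewrite pos; lia).
  have E : (m - d.+1).+1 = m - d by lia.
  by move: next; rewrite E IH ?mulSn; lia.
by have := top m (leqnn m); rewrite subnn.
Qed.

Lemma height_forced Dm mu : ~ height_mismatch (tot 2) Dm mu -> height mu = height Dm.
Proof.
move=> good; have same q : q <= height mu <-> q <= height Dm.
  by apply: NNPP => bad; apply: good; apply/height_mismatchE; exists q.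
by move: (same (height mu)) (same (height Dm)); lia.
Qed.

Lemma rows_forced k mu :
  ~ short_row (tot 2) (tot k.+1) mu -> forall j, 0 < row mu j -> k <= row mu j.
Proof.
move=> good j pos; apply: NNPP => short; apply: good; apply/short_rowE.
by exists j.+2; rewrite /cell_in subn2 /=; lia.
Qed.

Section ProductForced.
Variables (k : nat) (DM D' mu : partition).
Hypothesis k_gt0 : 0 < k.
Hypothesis DM_rows : forall i, row DM i = row DM 0 - i.
Hypothesis D'_rows : forall i, row D' i = row D' 0 - i.

Lemma shift_forced : ~ not_shift (column k.+1) DM D' -> row D' 0 = row DM 0 - (k - 1).
Proof.
move=> good; have shift p : cell_in p 2 D' <-> cell_in p k.+1 DM.
  by apply: NNPP => bad; apply: good; apply/not_shiftE; exists p.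
move: (shift (row D' 0).+2) (shift (row DM 0 - (k - 1)).+2).
rewrite /cell_in subnn D'_rows DM_rows subSS subn1 /=; lia.
Qed.

Lemma step_forced :
  row D' 0 = row DM 0 - (k - 1) -> row mu 0 <= row DM 0 ->
  (forall j, 0 < row mu j -> k <= row mu j) -> ~ bad_step (tot 2) DM D' mu ->
  forall j, 0 < row mu j -> row mu j.+1 = row mu j - k.
Proof.
move=> D'0 mu0 ge_k good j pos; have := ge_k j pos.
have := row_antimono mu (leq0n j); set M := row DM 0; set r := row mu j => le_r ge_r.
have next : (row mu j.+1).+1 = row D' (M - r).
  apply: NNPP => ne; apply: good; apply/bad_stepE.
  by exists j, (M - r); rewrite DM_rows; split=> //; lia.
by move: next; rewrite D'_rows D'0; lia.
Qed.
End ProductForced.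

Lemma product_forced m k DM D' mu : 0 < k ->
  ~ not_product (tot 2) (tot k.+1) (column k.+1) (staircase m) DM D' mu -> row mu 0 = m * k.
Proof.
move=> k_gt0 good.
have t_le_s : young_le (tot 2) (tot k.+1) by rewrite tot_le row_tot0.
have {good} := fun bad => good (conj t_le_s bad).
move=> /not_or_and [/staircase_rows DM_rows /not_or_and [/staircase_rows D'_rows]].
move=> /not_or_and [good_shift /not_or_and [/not_first_row_leE/NNPP/first_row_leE mu0]].
move=> /not_or_and [good_height /not_or_and [good_rows good_step]].
have D'0 := shift_forced k_gt0 DM_rows D'_rows good_shift.
have ge_k := rows_forced good_rows.
have step := step_forced k_gt0 DM_rows D'_rows D'0 mu0 ge_k good_step.
apply: arith_progression => j; last by move=> pos; split; [exact: ge_k | exact: step].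
by rewrite row_gt0 (height_forced good_height) height_staircase.
Qed.

Lemma product_canonical m k :
  ~ not_product (tot 2) (tot k.+1) (column k.+1) (staircase m)
      (staircase (m * k + k)) (staircase (m * k + 1)) (arith_staircase m k).
Proof.
move=> [t_le_s bad]; move: t_le_s; rewrite tot_le row_tot0 => k_gt0.
case: bad => [|[|[|[|[|[]]]]]].
- exact: staircase_good.
- exact: staircase_good.
- by case/not_shiftE=> p; rewrite /cell_in !row_staircase subnn; lia.
- by rewrite not_first_row_leE first_row_leE row_arith_staircase row_staircase; lia.
- by case/height_mismatchE=> q nq; apply: nq; rewrite height_arith_staircase // height_staircase.
- case/short_rowE=> q; rewrite /cell_in !row_arith_staircase.
  by case: (m - (q - 2)) => [|c]; rewrite ?mul0n ?mulSn; lia.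
case/bad_stepE=> j [a []]; rewrite !row_arith_staircase !row_staircase.
case def_c: (m - j) => [|c]; rewrite ?mul0n // mulSn => _.
have -> : m - j.+1 = c by lia.
have Em : m * k = j * k + (k + c * k) by rewrite -mulSn -mulnDl; congr muln; lia.
lia.
Qed.

Lemma aux_canonical m k :
  ~ not_aux (tot m) (tot k) (tot 2) (tot k.+1) (staircase k.+1) (column k.+1)
      (staircase m) (staircase (m * k + k)) (staircase (m * k + 1)) (arith_staircase m k).
Proof.
case=> [|[|[|[|[]]]]].
- by rewrite not_twoE.
- by rewrite not_succE.
- by rewrite not_staircase_ofE.
- by rewrite not_columnE height_staircase.
- by rewrite not_staircase_ofE.
- exact: product_canonical.
Qed.

Lemma main_sem_product m k t s S Q Dm DM D' mu :
  main_sem (tot m) (tot k) (tot (m * k)) t s S Q Dm DM D' mu.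
Proof.
split; first by split; [split|]; exact: tot_total.
case: (classic (not_aux (tot m) (tot k) t s S Q Dm DM D' mu)) => [|good]; [by left | right].
move: good => /not_or_and [/not_twoE/NNPP -> /not_or_and [/not_succE/NNPP ->]].
move=> /not_or_and [/not_staircase_ofE/NNPP -> /not_or_and [/not_columnE/NNPP ->]].
move=> /not_or_and [/not_staircase_ofE/NNPP -> good_product].
rewrite height_staircase in good_product.
rewrite /product_body !tot_le !row_tot0; case: (posnP k) => [->|k_gt0].
  by split; [left | right]; rewrite ?muln0.
have mu0 := product_forced k_gt0 good_product.
by split; [right; split; rewrite ?first_row_leE ?row_tot0 mu0 | left].
Qed.

Lemma main_sem_canonical m k N :
  main_sem (tot m) (tot k) (tot N) (tot 2) (tot k.+1) (staircase k.+1) (column k.+1)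
    (staircase m) (staircase (m * k + k)) (staircase (m * k + 1)) (arith_staircase m k) ->
  N = m * k.
Proof.
case=> _ [/aux_canonical //|[]]; rewrite !tot_le !row_tot0.
case: (posnP k) => [->|k_gt0]; first by rewrite muln0; lia.
by rewrite first_row_leE !row_arith_staircase row_tot0 subn0; lia.
Qed.

Lemma total_partE p : total_part p <-> ~ young_le p11 p.
Proof.
rewrite total_iff /total_part -/(height p) leqNgt -row_gt0 lt0n negbK.
by split=> [/eqP|->].
Qed.

Lemma part_weight_total p : ~ young_le p11 p -> part_weight p = row p 0.
Proof.
move/total_partE; rewrite /total_part /part_weight /row.
by case: (parts p) => [|x [|y s]] //= _; rewrite addn0.
Qed.

(* The variables t, s, S, Q, Dm, DM, D', mu of the outer universal block. *)
Definition aux_vars : seq nat := [:: 3; 4; 5; 6; 7; 8; 9; 10].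

Definition canonical_aux (v : nat -> partition) (m k : nat) : nat -> partition :=
  upd (upd (upd (upd (upd (upd (upd (upd v
    3 (tot 2)) 4 (tot k.+1)) 5 (staircase k.+1)) 6 (column k.+1)) 7 (staircase m))
    8 (staircase (m * k + k))) 9 (staircase (m * k + 1))) 10 (arith_staircase m k).

Lemma canonical_aux_agree v m k : agree_off aux_vars (canonical_aux v m k) v.
Proof. by move=> y; rewrite /canonical_aux /upd !inE; do !case: eqP. Qed.

(* The prenex formula  forall aux_vars, f_main  defines the relation: if it
   holds, instantiate the auxiliary variables canonically; conversely every
   instantiation satisfies [main_sem]. *)
Theorem proposition3p14 :
  Pi_definable3 3 (fun rho sigma pi =>
    [/\ total_part rho, total_part sigma, total_part pi & part_weight pi = part_weight rho * part_weight sigma]).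
Proof.
exists [:: aux_vars; evars f_main; avars f_main], (matrix f_main); split=> // v.
rewrite (pi3_prenex _ _ f_main_wf); split=> [sat|].
  have := sat v (fun _ _ => erefl); rewrite f_main_sat => -[[[T0 T1] T2] _].
  have [m v0] := totalP T0; have [k v1] := totalP T1; have [N v2] := totalP T2.
  have := sat _ (canonical_aux_agree v m k).
  rewrite f_main_sat /canonical_aux /upd /= v0 v1 v2 => /main_sem_canonical N_eq.
  rewrite !part_weight_total ?row_tot0 ?N_eq; try exact: tot_total.
  by split=> //; apply/total_partE; exact: tot_total.
case=> /total_partE T0 /total_partE T1 /total_partE T2.
rewrite !part_weight_total // => N_eq w agree_w.
rewrite f_main_sat (agree_w 0) // (agree_w 1) // (agree_w 2) //.
rewrite (totalE T0) (totalE T1) (totalE T2) N_eq.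
exact: main_sem_product.
Qed.
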